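(* Let each directed channel of a fully connected network of $n$ processes be timely independently with the same probability $p<1$. In a direct channel (single-hop) Omega implementation, a leader can exist only if some process has a timely direct channel to every other process. Then the probability of leader existence in any direct channel Omega implementation, i.e. the probability that there exists a process whose $n-1$ outgoing channels are all timely, approaches $0$ exponentially fast as $n\to\infty$.
   Context: A network has $n$ processes and a directed channel from every process to every other process. Each directed channel is timely with probability $p$, independently of all other channels (the channels from $x$ to $y$ and from $y$ to $x$ are distinct and independent). A direct channel (single-hop) implementation of the Omega failure detector is one in which messages are delivered only over direct channels, so a process can be the leader only if it has a timely direct channel to every other process. *)

From mathcomp Require Import all_boot all_order all_algebra.
Set Implicit Arguments. Unset Strict Implicit. Unset Printing Implicit Defensive.
Import Order.TTheory GRing.Theory Num.Theory.
Local Open Scope ring_scope.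

(* Directed channels of the complete network on n processes: ordered pairs
   (x, y) of distinct processes; (x,y) is the channel from x to y. *)
Definition chan (n : nat) : finType := {e : 'I_n * 'I_n | e.1 != e.2}.

Definition config (n : nat) : finType := {ffun chan n -> bool}.

Definition weight (R : nzRingType) (n : nat) (p : R) (w : config n) : R :=
  \prod_(e : chan n) (if w e then p else 1 - p).

Definition prob (R : nzRingType) (n : nat) (p : R) (E : pred (config n)) : R :=
  \sum_(w : config n | E w) weight p w.

Definition leader_possible (n : nat) (w : config n) : bool :=
  [exists x : 'I_n, [forall e : chan n, ((val e).1 == x) ==> w e]].

(** The event that some process has all its outgoing channels timely is the
    union over the n processes x of the event "every channel out of x is
    timely", which has probability p^(n-1) since there are n-1 such channels
    and they are independent.  The union bound gives n p^(n-1), and picking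
    d = (1 - p)/2 the linear term of the binomial expansion of (p + d)^n shows
    n p^(n-1) <= d^-1 (p + d)^n, a geometric bound with ratio p + d < 1. *)

From mathcomp Require Import all_boot all_order all_algebra.
From mathcomp Require Import lra.
Set Implicit Arguments. Unset Strict Implicit. Unset Printing Implicit Defensive.
Import Order.TTheory GRing.Theory Num.Theory.
Local Open Scope ring_scope.

Lemma sum_exists_le_sum (I T : finType) (R : numDomainType)
    (P : I -> pred T) (F : T -> R) :
  (forall t, 0 <= F t) ->
  \sum_(t | [exists i, P i t]) F t <= \sum_i \sum_(t | P i t) F t.
Proof.
move=> F_ge0.
under [X in _ <= X]eq_bigr => i _ do rewrite big_mkcond.
rewrite exchange_big big_mkcond /=; apply: ler_sum => t _.
have sum_if_ge0 : 0 <= \sum_i (if P i t then F t else 0).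
  by apply: sumr_ge0 => i _; case: ifP.
case: ifPn => [/existsP [i Pit] | _] //.
by rewrite (bigD1 i) //= Pit lerDl; apply: sumr_ge0 => j _; case: ifP.
Qed.

Lemma prob_all_timely (R : comNzRingType) (p : R) (n : nat) (S : {pred chan n}) :
  prob p (fun w : config n => [forall e in S, w e]) = p ^+ #|S|.
Proof.
pose G (e : chan n) (b : bool) : R :=
  if (e \in S) && ~~ b then 0 else if b then p else 1 - p.
have -> : prob p (fun w : config n => [forall e in S, w e])
        = \sum_(w : config n) \prod_(e : chan n) G e (w e).
  rewrite /prob big_mkcond /=; apply: eq_bigr => w _.
  have [allS | /forallPn [e]] := boolP [forall e in S, w e].
    apply: eq_bigr => e _; rewrite /G.
    by have /forallP/(_ e) := allS; case: (e \in S) (w e) => [] [].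
  rewrite negb_imply => /andP [Se we].
  by rewrite (bigD1 e) //= /G Se (negbTE we) mul0r.
rewrite -(bigA_distr_bigA G) -prodr_const [RHS]big_mkcond /=.
by apply: eq_bigr => e _; rewrite big_bool /G /=; case: (e \in S); rewrite ?addr0 ?subrKC.
Qed.

Lemma card_out_chan (n : nat) (x : 'I_n) :
  #|[pred e : chan n | (val e).1 == x]| = n.-1.
Proof.
pose out := [pred e : chan n | (val e).1 == x].
pose target (e : chan n) : 'I_n := (val e).2.
have inj_target : {in out &, injective target}.
  move=> e e' /eqP out_e /eqP out_e'; rewrite /target => eq_target; apply: val_inj.
  by rewrite [val e]surjective_pairing [val e']surjective_pairing out_e out_e' eq_target.
rewrite -(card_in_imset inj_target).
have -> : [set target e | e in out] = [set~ x].
  apply/setP => y; rewrite !inE; apply/imsetP/idP => [[e /eqP <- ->] | yx].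
    by rewrite eq_sym (valP e).
  have xy : (x, y).1 != (x, y).2 by rewrite eq_sym.
  by exists (exist _ (x, y) xy); rewrite ?inE.
by rewrite cardsC1 card_ord.
Qed.

Lemma exprD_ge_linear_term (R : numDomainType) (p d : R) (n : nat) :
  0 <= p -> 0 <= d -> n%:R * p ^+ n.-1 * d <= (p + d) ^+ n.
Proof.
move=> p_ge0 d_ge0; case: n => [|m]; first by rewrite !mul0r exprn_ge0 ?addr_ge0.
rewrite exprDn (bigD1 (inord 1)) //= inordK // subn1 bin1 /= expr1 -mulrA mulr_natl lerDl.
by apply: sumr_ge0 => i _; rewrite mulrn_wge0 // mulr_ge0 // exprn_ge0.
Qed.

Lemma weight_ge0 (R : numDomainType) (p : R) (n : nat) (w : config n) :
  0 <= p <= 1 -> 0 <= weight p w.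
Proof.
by case/andP=> p_ge0 p_le1; apply: prodr_ge0 => e _; case: (w e); rewrite ?subr_ge0.
Qed.

Lemma prob_leader_possible_le (R : numDomainType) (p : R) (n : nat) :
  0 <= p <= 1 -> prob p (@leader_possible n) <= n%:R * p ^+ n.-1.
Proof.
move=> p01.
pose out (x : 'I_n) := [pred e : chan n | (val e).1 == x].
apply: le_trans (sum_exists_le_sum (fun x (w : config n) => [forall e in out x, w e])
                   (fun w => weight_ge0 w p01)) _.
have prob_out x : prob p (fun w : config n => [forall e in out x, w e]) = p ^+ n.-1.
  by rewrite prob_all_timely card_out_chan.
by rewrite (eq_bigr _ (fun x _ => prob_out x)) sumr_const card_ord mulr_natl.
Qed.

Theorem theorem1 (R : realFieldType) (p : R) :
  0 <= p -> p < 1 ->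
  exists (C r : R), 0 < r /\ r < 1 /\
    forall n : nat, prob p (@leader_possible n) <= C * r ^+ n.
Proof.
move=> p_ge0 p_lt1.
pose d := (1 - p) / 2.
have d_gt0 : 0 < d by rewrite /d; lra.
exists d^-1, (p + d); split; [lra | split; [rewrite /d; lra | move=> n]].
have p01 : 0 <= p <= 1 by rewrite p_ge0 ltW.
apply: le_trans (prob_leader_possible_le n p01) _.
rewrite ler_pdivlMl // mulrC.
exact: exprD_ge_linear_term p_ge0 (ltW d_gt0).
Qed.
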